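(* Let $n\in\mathbb N$ and $i\in\{1,2\}$. Then $r(P_n,T_n^i)=2n-7$ for $n\ge 17$; $r(P_{n-1},T_n^i)=2n-7$ for $n\ge 13$; $r(P_{n-2},T_n^i)=2n-7$ for $n\ge 11$; and $r(P_{n-3},T_n^i)=2n-7$ for $n\ge 8$.
   Context: All graphs are finite and simple; a graph ''contains'' $H$ if it has a subgraph isomorphic to $H$. $P_m$ denotes the path on $m$ vertices. For graphs $G_1,G_2$, the Ramsey number $r(G_1,G_2)$ is the smallest positive integer $N$ such that for every graph $G$ on $N$ vertices, either $G$ contains a copy of $G_1$ or the complement $\overline G$ contains a copy of $G_2$. For $n\ge 5$, $T_n^1$ is the tree with vertex set $\{v_0,\ldots,v_{n-1}\}$ and edges $v_0v_1,\ldots,v_0v_{n-3},v_{n-4}v_{n-2},v_{n-3}v_{n-1}$, and $T_n^2$ is the tree on the same vertex set with edges $v_0v_1,\ldots,v_0v_{n-3},v_{n-3}v_{n-2},v_{n-3}v_{n-1}$. *)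

From mathcomp Require Import all_boot.
Set Implicit Arguments. Unset Strict Implicit. Unset Printing Implicit Defensive.

Definition simple_graph (N : nat) (g : rel 'I_N) : Prop :=
  symmetric g /\ irreflexive g.

Definition compl_graph (N : nat) (g : rel 'I_N) : rel 'I_N :=
  fun x y => (x != y) && ~~ g x y.

(* A pattern graph H on vertex set {0,...,m-1}, given by an adjacency
   relation h on nat (only its restriction to 'I_m matters). *)
Definition contains (m : nat) (h : rel nat) (N : nat) (g : rel 'I_N) : Prop :=
  exists f : 'I_m -> 'I_N, injective f /\
    forall x y : 'I_m, h x y -> g (f x) (f y).

Definition ramsey_prop (m1 : nat) (h1 : rel nat) (m2 : nat) (h2 : rel nat)
  (N : nat) : Prop :=
  forall g : rel 'I_N, simple_graph g ->
    contains m1 h1 g \/ contains m2 h2 (compl_graph g).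

Definition ramsey_number_is (m1 : nat) (h1 : rel nat) (m2 : nat) (h2 : rel nat)
  (R : nat) : Prop :=
  0 < R /\ ramsey_prop m1 h1 m2 h2 R /\
  forall M, 0 < M -> M < R -> ~ ramsey_prop m1 h1 m2 h2 M.

Definition path_adj : rel nat := fun i j => (i.+1 == j) || (j.+1 == i).

(* Directed edge lists of T_n^1 and T_n^2 (vertex v_k is k). *)
Definition T1_edge (n : nat) : rel nat := fun i j =>
  [|| (i == 0) && (1 <= j <= n - 3),
      (i == n - 4) && (j == n - 2) |
      (i == n - 3) && (j == n - 1)].

Definition T2_edge (n : nat) : rel nat := fun i j =>
  [|| (i == 0) && (1 <= j <= n - 3),
      (i == n - 3) && (j == n - 2) |
      (i == n - 3) && (j == n - 1)].

Definition sym_closure (e : rel nat) : rel nat := fun i j => e i j || e j i.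

Definition T_adj (n i : nat) : rel nat :=
  if i == 1 then sym_closure (T1_edge n) else sym_closure (T2_edge n).

(* We prove r(P_m, T_n^i) = 2n - 7 whenever n - 3 <= m <= n and
   3m + 16 <= 4n; the four ranges of the theorem are instances.

   Lower bound: on at most 2n - 8 vertices, two disjoint cliques of size at
   most n - 4 contain no P_m (as m > n - 4), and their complement is
   bipartite with sides of size at most n - 4, whereas the n - 3 vertices
   adjacent to the centre of T_n^i would all lie on one side.

   Upper bound: let g on 2n - 7 vertices contain no P_m, let vmin have
   minimum degree d and let h be the complement of g.
   - If m <= 2d + 1, a longest path of g has fewer than 2d edges, so by
     Dirac's rotation argument no vertex off the path is adjacent to it.
     The path and its complement then span a complete bipartite graph of h
     with sides of sizes at least 3 and n - 3, which contains T_n^i.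
   - Otherwise the set Sv of h-neighbours of vmin has more than m vertices.
     A star of h at vmin is completed into T_n^i by two disjoint h-edges
     leaving Sv (for T_n^1) or by a cherry of h inside Sv (for T_n^2); if
     there is no such configuration, g is so dense on Sv that it contains
     P_m, by a clique or by Dirac's theorem. *)

From mathcomp Require Import all_boot zify.
From Stdlib Require Import Classical_Prop.
Set Implicit Arguments. Unset Strict Implicit. Unset Printing Implicit Defensive.

Section SymmetricPaths.
Variables (T : eqType) (g : rel T).
Hypothesis gs : symmetric g.

Lemma rotation_cycle x a y0 b :
  path g x (a ++ y0 :: b) -> g x y0 -> g (last y0 b) (last x a) ->
  cycle g (x :: a ++ rev (y0 :: b)).
Proof.
move=> Hp Hxy Hl; rewrite /= rcons_cat cat_path.
move: Hp; rewrite cat_path => /andP[-> /= /andP[Hly Hb]].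
rewrite lastI rev_rcons rcons_cons /= rcons_path.
have Hr : path g (last y0 b) (rev (belast y0 b)).
  by rewrite rev_path (eq_path (e' := g)) // => u w; rewrite gs.
rewrite Hr gs Hl /=.
have -> : last (last y0 b) (rev (belast y0 b)) = y0.
  by elim/last_ind: b {Hl Hb Hr} => //= s u _; rewrite belast_rcons rev_cons last_rcons.
by rewrite gs.
Qed.

Lemma path_into_cycle (c : seq T) y z : cycle g c -> z \in c -> g y z ->
  exists s, path g y (z :: s) /\ perm_eq (z :: s) c.
Proof.
move=> Hc zc gyz; case: (rot_to zc) => i s Hr.
exists s; split; last by rewrite -Hr perm_rot.
move: Hc; rewrite -(rot_cycle i) Hr /= rcons_path => /andP[Hp _].
by rewrite /= gyz.
Qed.

Lemma crossing_cycle x q i : path g x q -> i < size q ->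
  g x (nth x q i) -> g (last x q) (nth x (x :: q) i) ->
  exists c, cycle g c /\ perm_eq c (x :: q).
Proof.
move=> Hp iq gxy gly.
set a := take i q; set y0 := nth x q i; set b := drop i.+1 q.
have Hq : q = a ++ y0 :: b by rewrite /a /y0 /b -(drop_nth x) ?cat_take_drop.
have Hlast : last y0 b = last x q by rewrite [in RHS]Hq last_cat.
have Hprev : nth x (x :: q) i = last x a.
  rewrite Hq -cat_cons nth_cat /= size_take iq ltnSn.
  by rewrite -[last x a]/(last x (x :: a)) -nth_last /= size_take iq.
exists (x :: a ++ rev (y0 :: b)); split.
  by apply: rotation_cycle; rewrite -?Hq ?Hlast -?Hprev.
by rewrite [in X in perm_eq _ X]Hq perm_cons perm_cat2l perm_rev.
Qed.

End SymmetricPaths.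

Lemma clique_path (T : eqType) (g : rel T) x s : uniq (x :: s) ->
  {in x :: s &, forall a b, a != b -> g a b} -> path g x s.
Proof.
elim: s x => [//|y s IH] x Hu Hc /=.
move: Hu; rewrite cons_uniq in_cons negb_or => /andP[/andP[xy xs] Hu].
rewrite Hc ?inE ?eqxx ?orbT //=; apply: IH => // a b Ha Hb; apply: Hc;
  by rewrite in_cons ?Ha ?Hb orbT.
Qed.

Lemma bounded_max (P : nat -> Prop) k b : P k -> (forall j, P j -> j <= b) ->
  exists j, P j /\ forall j', P j' -> j' <= j.
Proof.
move=> Pk; elim: b => [|b IH] Hb.
  by exists k; split=> // j /Hb; have := Hb k Pk; lia.
case: (classic (P b.+1)) => [Pb|nPb]; first by exists b.+1.
apply: IH => j Pj; have := Hb j Pj; rewrite leq_eqVlt => /orP[/eqP ej|//].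
by rewrite ej in Pj.
Qed.

Lemma filters_meet (a b : pred nat) K :
  K < size [seq i <- iota 0 K | a i] + size [seq i <- iota 0 K | b i] ->
  exists2 i, i < K & a i && b i.
Proof.
move=> HK; suff /hasP[i] : has (fun i => a i && b i) (iota 0 K).
  by rewrite mem_iota => /andP[_ iK] abi; exists i.
apply/negPn/negP => /hasPn Hn.
have Hu : uniq ([seq i <- iota 0 K | a i] ++ [seq i <- iota 0 K | b i]).
  rewrite cat_uniq !filter_uniq ?iota_uniq //= andbT.
  apply/hasPn => j; rewrite !mem_filter => /andP[bj jK].
  by apply/negP => /andP[aj _]; move: (Hn j jK); rewrite aj bj.
have Hsub : {subset [seq i <- iota 0 K | a i] ++ [seq i <- iota 0 K | b i]
                   <= iota 0 K}.
  by move=> j; rewrite mem_cat !mem_filter => /orP[/andP[_ ->]|/andP[_ ->]].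
by have := uniq_leq_size Hu Hsub; rewrite size_cat size_iota leqNgt HK.
Qed.

Section LongestPaths.
Variables (T : finType) (g : rel T).

Definition path_in (X : {set T}) x q :=
  [&& path g x q, uniq (x :: q) & all (fun z => z \in X) (x :: q)].

Definition longest_in (X : {set T}) x q :=
  path_in X x q /\ forall x' q', path_in X x' q' -> size q' <= size q.

Definition deg_in (X : {set T}) y := #|[set z in X | g y z]|.

Lemma longest_path_exists (X : {set T}) x0 : x0 \in X ->
  exists x q, longest_in X x q.
Proof.
move=> x0X.
have [|j [x [q [Hin <-]]]|j [[x [q [Hin Hs]]] Hmax]] :=
  @bounded_max (fun k => exists x q, path_in X x q /\ size q = k) 0 #|T|.
- by exists x0, [::]; rewrite /path_in /= x0X.
- apply: ltnW; rewrite -[(size q).+1]/(size (x :: q)).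
  by case/and3P: Hin => _ /card_uniqP <- _; apply: max_card.
exists x, q; split=> // x' q' Hin'; rewrite Hs; apply: Hmax; by exists x', q'.
Qed.

Hypotheses (gs : symmetric g) (gi : irreflexive g).

(* The neighbours in X of both ends of a longest path in X lie on the path,
   since otherwise the path could be extended. *)
Lemma longest_ends_closed (X : {set T}) x q : longest_in X x q ->
  (forall z, z \in X -> g x z -> z \in x :: q) /\
  (forall z, z \in X -> g (last x q) z -> z \in x :: q).
Proof.
move=> [/and3P[Hp Hu Ha] Hmax]; split=> z zX gz; apply/negPn/negP => zq.
  have /Hmax : path_in X z (x :: q).
    by rewrite /path_in /= gs gz Hp; rewrite /= in Hu Ha; rewrite zq Hu zX Ha.
  by rewrite /= ltnn.
have /Hmax : path_in X x (rcons q z).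
  by rewrite /path_in rcons_path Hp gz -rcons_cons rcons_uniq zq Hu all_rcons zX.
by rewrite size_rcons ltnn.
Qed.

Lemma neighbour_positions (X : {set T}) y s z0 K : K <= size s ->
  (forall z, z \in X -> g y z -> index z s < K) ->
  deg_in X y <= size [seq i <- iota 0 K | g y (nth z0 s i)].
Proof.
move=> Ks Hidx; rewrite /deg_in cardE -(size_map (index^~ s)).
have Hnb z : z \in enum [set z in X | g y z] -> [/\ z \in X, z \in s & g y z].
  rewrite mem_enum inE => /andP[zX gyz]; split=> //.
  by rewrite -index_mem; apply: leq_trans (Hidx z zX gyz) Ks.
apply: uniq_leq_size.
  rewrite map_inj_in_uniq ?enum_uniq // => z1 z2 /Hnb[_ z1s _] /Hnb[_ z2s _] Heq.
  by rewrite -(nth_index z0 z1s) Heq nth_index.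
move=> i /mapP[z /Hnb[zX zs gyz] ->].
by rewrite mem_filter nth_index // gyz mem_iota /= Hidx.
Qed.

Lemma longest_crossing (X : {set T}) d x q :
  (forall y, y \in X -> d <= deg_in X y) -> longest_in X x q -> size q < 2 * d ->
  exists2 i, i < size q & g x (nth x q i) && g (last x q) (nth x (x :: q) i).
Proof.
move=> Hdeg Hlong Hsz; have [Sx Sl] := longest_ends_closed Hlong.
have [/and3P[_ _ Ha] _] := Hlong.
have xX : x \in X := allP Ha x (mem_head _ _).
have lX : last x q \in X by apply: (allP Ha); rewrite mem_last.
apply: filters_meet; apply: leq_trans Hsz _; rewrite mul2n -addnn.
apply: leq_add; apply: leq_trans (Hdeg _ _) (neighbour_positions _ _ _) => //.
- move=> z zX gxz; rewrite index_mem.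
  by have := Sx z zX gxz; rewrite inE => /orP[/eqP zx|//]; rewrite zx gi in gxz.
- move=> z zX glz; have zq := Sl z zX glz.
  have := index_mem z (x :: q); rewrite zq ltnS leq_eqVlt => /orP[/eqP Hi|//].
  by move: glz; rewrite -(nth_index x zq) Hi -[size q]/((size (x :: q)).-1) nth_last gi.
Qed.

Lemma longest_path_isolated (X : {set T}) d x q :
  (forall y, y \in X -> d <= deg_in X y) -> longest_in X x q -> size q < 2 * d ->
  forall y z, y \in X -> y \notin x :: q -> z \in x :: q -> ~~ g y z.
Proof.
move=> Hdeg Hlong Hsz y z yX yq zq; apply/negP => gyz.
have [/and3P[Hp Hu Ha] Hmax] := Hlong.
have [i iq /andP[gxi gli]] := longest_crossing Hdeg Hlong Hsz.
have [c [Hc Hcq]] := crossing_cycle gs Hp iq gxi gli.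
have zc : z \in c by rewrite (perm_mem Hcq).
have [s [Hys Hsc]] := path_into_cycle Hc zc gyz.
have Hsq := perm_trans Hsc Hcq.
have /Hmax : path_in X y (z :: s).
  rewrite /path_in Hys cons_uniq (perm_mem Hsq) yq (perm_uniq Hsq) Hu.
  apply/allP => w; rewrite inE (perm_mem Hsq) => /orP[/eqP->//|]; exact: (allP Ha).
by rewrite (perm_size Hsq) /= ltnn.
Qed.

Lemma dirac_spanning_path (X : {set T}) d x0 : x0 \in X -> #|X| <= 2 * d ->
  (forall y, y \in X -> d <= deg_in X y) ->
  exists x q, path_in X x q /\ size (x :: q) = #|X|.
Proof.
move=> x0X HX Hdeg.
have [x [q Hlong]] := longest_path_exists x0X.
have [/and3P[Hp Hu Ha] _] := Hlong.
set P := [set z | z \in x :: q].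
have PX : P \subset X by apply/subsetP => z; rewrite inE => /(allP Ha).
have HP : #|P| = size (x :: q) by rewrite cardsE; apply/card_uniqP.
have Hsz : size q < 2 * d by have := subset_leq_card PX; rewrite HP /=; lia.
have Hiso := longest_path_isolated Hdeg Hlong Hsz.
exists x, q; split; first by apply/and3P.
rewrite -HP; apply/eqP; rewrite eqn_leq subset_leq_card //=.
apply/subset_leq_card/subsetP => y yX; rewrite inE; apply/negPn/negP => yq.
have xX : x \in X := allP Ha x (mem_head x q).
(* the neighbourhoods of x and y are disjoint subsets of X minus x and y *)
set Nx := [set z in X | g x z]; set Ny := [set z in X | g y z].
have Nx_on z : z \in Nx -> z \in x :: q.
  rewrite inE => /andP[zX gxz]; apply/negPn/negP => zq.
  by move: (Hiso z x zX zq (mem_head x q)); rewrite gs gxz.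
have Ny_off z : z \in Ny -> z \notin x :: q.
  by rewrite inE => /andP[zX gyz]; apply/negP => /(Hiso y z yX yq); rewrite gyz.
have HI : Nx :&: Ny = set0.
  by apply/setP => z; rewrite inE in_set0; apply/negP => /andP[/Nx_on zq /Ny_off]; rewrite zq.
have HU : Nx :|: Ny \subset X :\ y :\ x.
  apply/subsetP => z; rewrite in_setU !in_setD1.
  case/orP => [zN|zN]; move: (zN); rewrite inE => /andP[zX gz]; rewrite zX andbT.
  - rewrite (memPn yq z (Nx_on z zN)) andbT; apply/eqP => zx.
    by rewrite zx gi in gz.
  - have zx : z != x by apply: contraNneq (Ny_off z zN) => ->; apply: mem_head.
    by rewrite zx /=; apply/eqP => zy; rewrite zy gi in gz.
have := subset_leq_card HU; rewrite cardsU HI cards0 subn0.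
have := cardsD1 y X; have := cardsD1 x (X :\ y).
rewrite yX in_setD1 xX andbT; case: eqP => [xy|_]; first by rewrite -xy mem_head in yq.
have X0 : 0 < #|X| by apply/card_gt0P; exists x0.
have := Hdeg x xX; have := Hdeg y yX; rewrite /deg_in -/Nx -/Ny /=.
by lia.
Qed.

Lemma neighbours_inside (A : {set T}) y : y \in A ->
  (forall z, g y z -> z \in A) -> deg_in setT y < #|A|.
Proof.
move=> yA HA; rewrite (cardsD1 y A) yA ltnS; apply: subset_leq_card.
apply/subsetP => z; rewrite !inE => gyz; rewrite HA // andbT.
by apply: contraTneq gyz => ->; rewrite gi.
Qed.

End LongestPaths.

Lemma pick_seq (T : finType) (A : {set T}) k : k <= #|A| ->
  exists L : seq T, [/\ size L = k, uniq L & {subset L <= A}].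
Proof.
move=> Hk; exists (take k (enum A)); split.
- by rewrite size_takel // -cardE.
- by rewrite take_uniq // enum_uniq.
- by move=> z /mem_take; rewrite mem_enum.
Qed.

Lemma card_set_avoid (T : finType) (A : {set T}) (s : seq T) :
  #|A| <= #|[set x in A | x \notin s]| + size s.
Proof.
have sub : A \subset [set x in A | x \notin s] :|: [set x in s].
  by apply/subsetP => x xA; rewrite !inE xA; case: (x \in s).
have := subset_leq_card sub; have := cardsUI [set x in A | x \notin s] [set x in s].
have Hs : #|[set x in s]| <= size s by rewrite cardsE card_size.
by lia.
Qed.

Lemma path_contains N (g : rel 'I_N) m x q :
  symmetric g -> path g x q -> uniq (x :: q) -> m <= size (x :: q) ->
  contains m path_adj g.
Proof.
move=> gs Hp Hu Hm.
have Hlt (j : 'I_m) : j < size (x :: q) := leq_trans (ltn_ord j) Hm.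
exists (fun j : 'I_m => nth x (x :: q) j); split.
  by move=> j k /eqP; rewrite nth_uniq // => /eqP/val_inj.
have E j : j.+1 < size (x :: q) -> g (nth x (x :: q) j) (nth x (x :: q) j.+1).
  by move=> Hj; apply: (pathP x Hp).
move=> j k /orP[/eqP Hk|/eqP Hj].
  by rewrite -Hk; apply: E; rewrite Hk.
by rewrite gs -Hj; apply: E; rewrite Hj.
Qed.

Lemma sym_closure_hom N (h : rel 'I_N) (F : nat -> 'I_N) (e : rel nat) :
  symmetric h -> (forall a b, e a b -> h (F a) (F b)) ->
  forall a b, sym_closure e a b -> h (F a) (F b).
Proof. by move=> hs he a b /orP[/he //|/he]; rewrite hs. Qed.

(* Taking the vertices c, L, a, b, w1, w2 in this order embeds T_n^i in h as
   soon as c is joined to a, b and L, while w1 hangs from a (for T_n^1) or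
   from b (for T_n^2) and w2 hangs from b. *)
Lemma T_embed N (h : rel 'I_N) n i c (L : seq 'I_N) a b w1 w2 :
  symmetric h -> 5 <= n -> size L = n - 5 ->
  uniq ([:: c; w1; w2] ++ b :: a :: L) ->
  (forall l, l \in b :: a :: L -> h c l) ->
  h (if i == 1 then a else b) w1 -> h b w2 -> contains n (T_adj n i) h.
Proof.
move=> hs n5 HL Hu Hc Hw1 Hw2.
set s := c :: L ++ [:: a; b; w1; w2].
have Hs : size s = n by rewrite /= size_cat HL /=; lia.
have Hus : uniq s.
  rewrite (perm_uniq (_ : perm_eq s ([:: c; w1; w2] ++ b :: a :: L))) //.
  by apply/permP => p; rewrite /= !count_cat /=; lia.
have tail k : k < 4 -> nth c s (n - 4 + k) = nth c [:: a; b; w1; w2] k.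
  by move=> k4; rewrite /s -cat_cons nth_cat /= HL ifF; [congr nth|]; lia.
have sa : nth c s (n - 4) = a by rewrite -[n - 4]addn0 tail.
have sb : nth c s (n - 3) = b by rewrite (_ : n - 3 = n - 4 + 1) ?tail //; lia.
have sw1 : nth c s (n - 2) = w1 by rewrite (_ : n - 2 = n - 4 + 2) ?tail //; lia.
have sw2 : nth c s (n - 1) = w2 by rewrite (_ : n - 1 = n - 4 + 3) ?tail //; lia.
have star j : 1 <= j <= n - 3 -> h c (nth c s j).
  case: j => // j /andP[_ jn]; apply: Hc.
  have jL : j < size (L ++ [:: a; b]) by rewrite size_cat HL /=; lia.
  rewrite /= -[[:: a; b; w1; w2]]/([:: a; b] ++ [:: w1; w2]) catA nth_cat jL.
  have := mem_nth c jL; rewrite mem_cat !inE.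
  by case/orP=> [->|/orP[->|->]]; rewrite ?orbT.
exists (fun j : 'I_n => nth c s j); split.
  by move=> j k /eqP; rewrite nth_uniq ?Hs // => /eqP/val_inj.
move=> x y; rewrite /T_adj; case: ifP Hw1 => _ Hw1;
  apply: sym_closure_hom => // {}x {}y; rewrite /T1_edge /T2_edge;
  case/or3P=> [/andP[/eqP-> /star //]|/andP[/eqP-> /eqP->]|/andP[/eqP-> /eqP->]];
  by rewrite ?sa ?sb ?sw1 ?sw2.
Qed.

Lemma bipartite_embed N (h : rel 'I_N) n i (P Q : {set 'I_N}) :
  symmetric h -> irreflexive h -> 5 <= n -> 3 <= #|P| -> n - 3 <= #|Q| ->
  (forall p q, p \in P -> q \in Q -> h p q) -> contains n (T_adj n i) h.
Proof.
move=> hs hi n5 HP HQ Hb.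
have [[|c [|w1 [|w2 [|? ?]]]] [//= _ Uc Pc]] := pick_seq HP.
have HQ' : (n - 5).+2 <= #|Q| by lia.
have [[|b [|a L]] [//= [HL] UL QL]] := pick_seq HQ'.
have cP : c \in P by apply: Pc; rewrite inE eqxx.
have wP w : w \in [:: w1; w2] -> w \in P by move=> wi; apply: Pc; rewrite inE wi orbT.
apply: (T_embed (c := c) (L := L) (a := a) (b := b) (w1 := w1) (w2 := w2)) => //.
- rewrite cat_uniq; apply/and3P; split; [exact: Uc | | exact: UL].
  apply/hasPn => x /QL xQ.
  by apply: contraL xQ => /Pc xP; apply/negP => xQ; move: (Hb x x xP xQ); rewrite hi.
- by move=> l /QL; apply: Hb.
- rewrite hs; apply: Hb; first by apply: wP; rewrite mem_head.
  by apply: QL; case: ifP; rewrite !inE eqxx ?orbT.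
- rewrite hs; apply: Hb; first by apply: wP; rewrite !inE eqxx orbT.
  by apply: QL; rewrite mem_head.
Qed.

Section LowerBound.
Variables (n M : nat).
Hypotheses (HM : M <= 2 * n - 8) (n8 : 8 <= n).

Definition two_cliques : rel 'I_M :=
  fun x y => (x != y) && ((x < n - 4) == (y < n - 4)).

Lemma two_cliques_simple : simple_graph two_cliques.
Proof.
split; last by move=> x; rewrite /two_cliques eqxx.
by move=> x y; rewrite /two_cliques eq_sym [(y < _) == _]eq_sym.
Qed.

Lemma side_size (s : seq 'I_M) b : uniq s ->
  (forall x, x \in s -> (x < n - 4) = b) -> size s <= n - 4.
Proof.
move=> Hu Hs; rewrite -(size_map val).
have Hu' : uniq (map val s) by rewrite map_inj_uniq //; exact: val_inj.
case: b Hs => Hs.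
  rewrite -(size_iota 0 (n - 4)); apply: (uniq_leq_size Hu') => k /mapP[x xs ->].
  by rewrite mem_iota /= Hs.
rewrite -(size_iota (n - 4) (n - 4)); apply: (uniq_leq_size Hu').
move=> k /mapP[[x Hx] xs ->] /=.
by rewrite mem_iota; move: (Hs _ xs) => /= /negbT; rewrite -leqNgt; lia.
Qed.

(* A path stays inside one clique, so P_m does not fit when m > n - 4. *)
Lemma two_cliques_no_path m : n - 3 <= m -> ~ contains m path_adj two_cliques.
Proof.
move=> Hm [f [finj Hf]].
case: m Hm f finj Hf => [|m] Hm f finj Hf; first by lia.
set c := (f ord0 < n - 4).
have Hside k (Hk : k < m.+1) : (f (Ordinal Hk) < n - 4) = c.
  elim: k Hk => [|k IH] Hk; first by rewrite /c; congr (f _ < _); apply: val_inj.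
  have Hk' : k < m.+1 by apply: ltnW.
  have := Hf (Ordinal Hk') (Ordinal Hk); rewrite /path_adj /= eqxx => /(_ isT).
  by rewrite /two_cliques => /andP[_ /eqP <-]; apply: IH.
have : m.+1 <= n - 4.
  rewrite -{1}(size_enum_ord m.+1) -(size_map f).
  apply: (@side_size (map f (enum 'I_m.+1)) c); first by rewrite map_inj_uniq ?enum_uniq.
  by move=> x /mapP[[k Hk] _ ->]; exact: Hside.
lia.
Qed.

(* The complement is bipartite with sides of size at most n - 4, while the
   n - 3 leaves v_1, ..., v_(n-3) of the centre of T_n^i would all lie on the
   side opposite to the centre. *)
Lemma two_cliques_compl_no_T i : ~ contains n (T_adj n i) (compl_graph two_cliques).
Proof.
move=> [f [finj Hf]].
have n0 : 0 < n by lia.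
have Hl (j : 'I_(n - 3)) : j.+1 < n by have := ltn_ord j; lia.
set c := (f (Ordinal n0) < n - 4).
have : n - 3 <= n - 4.
  rewrite -(size_enum_ord (n - 3)) -(size_map (fun j => f (Ordinal (Hl j)))).
  apply: (@side_size _ (~~ c)).
    by rewrite map_inj_uniq ?enum_uniq // => j k /finj /(congr1 val) /= [] /val_inj.
  move=> x /mapP[j _ ->].
  have : T_adj n i (Ordinal n0) (Ordinal (Hl j)).
    rewrite /T_adj /sym_closure /T1_edge /T2_edge /=.
    by have := ltn_ord j; case: (i == 1) => Hj; rewrite (_ : 1 <= j.+1 <= n - 3) //; lia.
  move/Hf; rewrite /compl_graph /two_cliques => /andP[_].
  have -> : f (Ordinal n0) != f (Ordinal (Hl j)) by apply/eqP => /finj /(congr1 val).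
  by rewrite /c /=; case: (f (Ordinal (Hl j)) < n - 4); case: (f (Ordinal n0) < n - 4).
lia.
Qed.

Lemma lower_bound m i : n - 3 <= m -> ~ ramsey_prop m path_adj n (T_adj n i) M.
Proof.
move=> Hm Hr; case: (Hr two_cliques two_cliques_simple).
- exact: two_cliques_no_path.
- exact: two_cliques_compl_no_T.
Qed.

End LowerBound.

Section UpperBound.
Variables (n m N : nat) (g : rel 'I_N).
Hypotheses (HN : N = 2 * n - 7) (n8 : 8 <= n).
Hypotheses (Hm1 : n - 3 <= m) (Hm2 : m <= n) (Hm3 : 3 * m + 16 <= 4 * n).
Hypotheses (gs : symmetric g) (gi : irreflexive g).
Hypothesis no_path : ~ contains m path_adj g.

Let h := compl_graph g.

Lemma h_sym : symmetric h.
Proof. by move=> a b; rewrite /h /compl_graph eq_sym gs. Qed.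

Lemma h_irr : irreflexive h.
Proof. by move=> a; rewrite /h /compl_graph eqxx. Qed.

Lemma h_neq a b : h a b -> a != b.
Proof. by case/andP. Qed.

Lemma g_of_not_h a b : ~~ h a b -> a != b -> g a b.
Proof. by rewrite /h /compl_graph => /nandP[/negPn->|/negPn]. Qed.

Lemma short_path x q : path g x q -> uniq (x :: q) -> size (x :: q) < m.
Proof.
move=> Hp Hu; rewrite ltnNge; apply/negP => Hm; apply: no_path.
exact: (path_contains gs Hp Hu Hm).
Qed.

Let deg y := deg_in g setT y.

Lemma N_gt0 : 0 < N.
Proof. by rewrite HN; lia. Qed.

Definition vmin := [arg min_(y < Ordinal N_gt0) deg y].

Lemma vmin_min y : deg vmin <= deg y.
Proof. by rewrite /vmin; case: arg_minnP => // z _; apply. Qed.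

(* Case m <= 2 deg vmin + 1: the vertex set P of a longest path of g has no
   g-neighbour outside P, so P and its complement span a complete bipartite
   graph of h whose sides both exceed deg vmin; one side has at least n - 3
   vertices, the other at least 3. *)
Lemma T_large_min_degree i : m <= 2 * deg vmin + 1 -> contains n (T_adj n i) h.
Proof.
move=> Hd; set d := deg vmin in Hd *.
have Hdeg y : y \in setT -> d <= deg_in g setT y by move=> _; apply: vmin_min.
have [x [q Hlong]] := longest_path_exists g (in_setT vmin).
have [/and3P[Hp Hu _] _] := Hlong.
have Hk : (size q).+1 < m := short_path Hp Hu.
have Hsz : size q < 2 * d by lia.
have Hiso := longest_path_isolated gs gi Hdeg Hlong Hsz.
set P := [set z | z \in x :: q].
have cross a b : a \in P -> b \notin P -> ~~ g a b.
  by rewrite !in_set => aP bP; rewrite gs; exact: Hiso (in_setT b) bP aP.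
have same_side a b : g a b -> (a \in P) = (b \in P).
  by move=> gab; apply/idP/idP => [aP|bP]; apply: contraTT gab => ?;
    [apply: cross | rewrite gs; apply: cross].
have HP : #|P| = size (x :: q) by rewrite cardsE; apply/card_uniqP.
have HPc : #|P| + #|~: P| = N by rewrite cardsC card_ord.
have dP : d < #|P|.
  apply: leq_ltn_trans (vmin_min x) (neighbours_inside gi _ _).
    by rewrite inE mem_head.
  by move=> z /same_side <-; rewrite inE mem_head.
have [y yP] : exists y, y \in ~: P.
  by apply/set0Pn; rewrite -card_gt0; move: HPc; rewrite HP /= in Hk *; lia.
have dPc : d < #|~: P|.
  apply: leq_ltn_trans (vmin_min y) (neighbours_inside gi yP _).
  by move=> z /same_side; rewrite in_setC => <-; rewrite -in_setC.
have Hb a b : a \in P -> b \in ~: P -> h a b.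
  move=> aP; rewrite inE => bP; rewrite /h /compl_graph cross // andbT.
  by apply: contraNneq bP => <-.
have n5 : 5 <= n by lia.
have [Pbig|Psmall] := leqP (n - 3) #|P|.
  have Pc3 : 3 <= #|~: P| by lia.
  apply: (@bipartite_embed _ h n i (~: P) P h_sym h_irr) => //.
  by move=> a b aPc bP; rewrite h_sym; apply: Hb.
have P3 : 3 <= #|P| by lia.
have Pcbig : n - 3 <= #|~: P| by lia.
exact: (@bipartite_embed _ h n i P (~: P) h_sym h_irr).
Qed.

Definition Sv := [set y | h vmin y].

Lemma Sv_h y : y \in Sv -> h vmin y.
Proof. by rewrite inE. Qed.

Lemma Sv_neq y : y \in Sv -> y != vmin.
Proof. by move/Sv_h/h_neq; rewrite eq_sym. Qed.

(* Sv, vmin and the neighbours of vmin partition the vertex set. *)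
Lemma card_Sv : #|Sv| + deg vmin + 1 = N.
Proof.
have -> : Sv = ~: (vmin |: [set z in setT | g vmin z]).
  by apply/setP => z; rewrite !inE /h /compl_graph negb_or eq_sym.
have := cardsC (vmin |: [set z in setT | g vmin z]).
rewrite cardsU1 card_ord inE gi andbF /= /deg /deg_in => HC.
by apply: etrans HC; rewrite -addnA addnC addn1 add1n.
Qed.

Lemma Sv_large : 2 * deg vmin + 2 <= m ->
  [/\ n - 1 <= #|Sv|, m.+1 <= #|Sv| & m + 3 <= N].
Proof. by move: card_Sv; move: #|Sv| (deg vmin) => s d Hs Hd; split; lia. Qed.

Lemma pick_in_Sv (s : seq 'I_N) k : uniq (vmin :: s) -> k + size s <= #|Sv| ->
  exists L, [/\ size L = k, uniq ((vmin :: s) ++ L) & {subset L <= Sv}].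
Proof.
move=> Us Hk.
have [|L [HL UL LR]] := @pick_seq _ [set x in Sv | x \notin s] k.
  by rewrite -(leq_add2r (size s)); apply: leq_trans Hk (card_set_avoid Sv s).
exists L; split=> //; last by move=> x /LR; rewrite in_set => /andP[].
rewrite cat_uniq Us UL andbT; apply/hasPn => x /LR; rewrite in_set => /andP[xS xs].
by rewrite in_cons negb_or xs (Sv_neq xS).
Qed.

Lemma T_cherry i u w1 w2 : i != 1 -> 2 * deg vmin + 2 <= m ->
  u \in Sv -> w1 \in Sv -> w2 \in Sv -> h u w1 -> h u w2 -> w1 != w2 ->
  contains n (T_adj n i) h.
Proof.
move=> i1 Hd uS w1S w2S uw1 uw2 w12; have [S1 _ _] := Sv_large Hd.
have Us : uniq [:: vmin; w1; w2; u].
  rewrite /= !inE !negb_or ![vmin == _]eq_sym !Sv_neq // w12.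
  by rewrite ![_ == u]eq_sym !h_neq.
have Hk : (n - 5).+1 + size [:: w1; w2; u] <= #|Sv| by move: #|Sv| S1 => k /=; lia.
have [[|a L] [//= [HL] UL LS]] := pick_in_Sv Us Hk.
apply: (@T_embed _ h n i vmin L a u w1 w2 h_sym) => //; first lia.
- by move=> l; rewrite in_cons => /orP[/eqP->|/LS]; apply: Sv_h.
- by rewrite (negbTE i1).
Qed.

Lemma T1_matching u1 w1 u2 w2 : 2 * deg vmin + 2 <= m ->
  u1 \in Sv -> u2 \in Sv -> h u1 w1 -> h u2 w2 -> uniq [:: vmin; w1; w2; u2; u1] ->
  contains n (T_adj n 1) h.
Proof.
move=> Hd u1S u2S uw1 uw2 Us; have [S1 _ _] := Sv_large Hd.
have Hk : n - 5 + size [:: w1; w2; u2; u1] <= #|Sv| by move: #|Sv| S1 => k /=; lia.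
have [L [HL UL LS]] := pick_in_Sv Us Hk.
apply: (@T_embed _ h n 1 vmin L u1 u2 w1 w2 h_sym) => //; first lia.
by move=> l; rewrite !in_cons => /or3P[/eqP->|/eqP->|/LS]; apply: Sv_h.
Qed.

(* If, apart from two vertices a and b, every vertex z of Sv is adjacent in g
   to every vertex outside vmin, a, b, z, then g contains P_m: m - 1 such
   vertices z together with one further vertex form a clique. *)
Lemma path_from_near_clique a b : 2 * deg vmin + 2 <= m ->
  (forall z c, z \in Sv -> z \notin [:: a; b] -> c \notin [:: vmin; a; b; z] -> g z c) ->
  contains m path_adj g.
Proof.
move=> Hd Hadj; have [_ S2 S3] := Sv_large Hd.
have HR : m.-1 <= #|[set x in Sv | x \notin [:: a; b]]|.
  by have := card_set_avoid Sv [:: a; b]; move: #|Sv| #|[set x in _ | _]| S2 => k l /=; lia.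
have [Z [HZ UZ ZR]] := pick_seq HR.
have [y yW] : exists y, y \in ~: [set x in vmin :: a :: b :: Z].
  apply/set0Pn; rewrite -card_gt0.
  have := cardsC [set x in vmin :: a :: b :: Z]; rewrite card_ord cardsE.
  have := card_size (vmin :: a :: b :: Z); rewrite /= HZ; move: #|_ :: _| #|~: _| => k l; lia.
have yZ : y \notin Z by move: yW; rewrite !inE !negb_or => /and4P[].
have Zadj z c : z \in Z -> c \in y :: Z -> c != z -> g z c.
  move=> /ZR; rewrite in_set => /andP[zS zab] cY cz; apply: Hadj => //.
  rewrite -[[:: vmin; a; b; z]]/([:: vmin; a; b] ++ [:: z]) mem_cat negb_or mem_seq1 cz andbT.
  move: cY; rewrite in_cons => /orP[/eqP->|/ZR].
    by move: yW; rewrite !inE !negb_or => /and4P[-> -> -> _].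
  by rewrite in_set => /andP[cS cab]; rewrite in_cons negb_or (Sv_neq cS).
have Uy : uniq (y :: Z) by rewrite /= yZ UZ.
have Hp : path g y Z.
  apply: clique_path => // p q; rewrite in_cons => /orP[/eqP->|pZ] qY qp.
    move: qY qp; rewrite in_cons => /orP[/eqP->|qZ]; first by rewrite eqxx.
    by rewrite gs => yq; apply: Zadj; rewrite ?mem_head // eq_sym.
  by apply: Zadj; rewrite // eq_sym.
by apply: (path_contains gs Hp Uy); rewrite /= HZ; lia.
Qed.

(* If every vertex of Sv has at most one h-neighbour in Sv, then g restricted
   to Sv satisfies Dirac's condition, so it has a spanning path, on more
   than m vertices. *)
Lemma path_from_sparse_complement : 2 * deg vmin + 2 <= m ->
  (forall u, u \in Sv -> #|[set w in Sv | h u w]| <= 1) -> contains m path_adj g.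
Proof.
move=> Hd Hsparse; have [S1 S2 _] := Sv_large Hd.
have Hdeg u : u \in Sv -> #|Sv| - 2 <= deg_in g Sv u.
  move=> uS.
  have sub : Sv :\ u \subset [set z in Sv | g u z] :|: [set w in Sv | h u w].
    apply/subsetP => z /setD1P[zu zS]; rewrite in_setU !in_set (Sv_h zS) /=.
    by case hz: (h u z); rewrite ?orbT //= g_of_not_h ?hz // eq_sym.
  have := subset_leq_card sub; have := cardsUI [set z in Sv | g u z] [set w in Sv | h u w].
  have := cardsD1 u Sv; rewrite uS; have := Hsparse u uS; rewrite /deg_in.
  move: #|Sv| #|Sv :\ u| #|[set z in Sv | g u z]| #|[set w in Sv | h u w]|.
  by move: #|_ :|: _| #|_ :&: _| => *; lia.
have [u0 u0S] : exists u, u \in Sv.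
  by apply/set0Pn; rewrite -card_gt0; move: #|Sv| S1 => k; lia.
have HS : #|Sv| <= 2 * (#|Sv| - 2) by move: #|Sv| S1 => k; lia.
have [x [q [/and3P[Hp Hu _] Hq]]] := dirac_spanning_path gs gi u0S HS Hdeg.
by apply: (path_contains gs Hp Hu); rewrite Hq; move: #|Sv| S2 => k; lia.
Qed.

(* Case 2 deg vmin + 2 <= m for T_n^1: either h has two disjoint edges
   leaving Sv, or all but at most two vertices of Sv are adjacent in g to
   nearly everything, which produces P_m. *)
Lemma T1_small_min_degree : 2 * deg vmin + 2 <= m -> contains n (T_adj n 1) h.
Proof.
move=> Hd.
case: (classic (exists u1 w1 u2 w2, [/\ u1 \in Sv, u2 \in Sv, h u1 w1, h u2 w2 &
                                       uniq [:: vmin; w1; w2; u2; u1]]))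
  => [[u1 [w1 [u2 [w2 [u1S u2S uw1 uw2 Us]]]]]|no_matching].
  exact: (T1_matching Hd u1S u2S uw1 uw2 Us).
exfalso; apply: no_path.
have edge_g z c : z \in Sv -> c != z -> ~~ h z c -> g z c.
  by move=> zS cz /g_of_not_h; apply; rewrite eq_sym.
case: (classic (exists u1 w1, [/\ u1 \in Sv, h u1 w1 & w1 != vmin]))
  => [[u1 [w1 [u1S uw1 w1v]]]|no_edge].
- apply: (@path_from_near_clique u1 w1 Hd) => z c zS zuw cavoid.
  apply: edge_g => //; first by apply: contra cavoid => /eqP->; rewrite !inE eqxx !orbT.
  apply/negP => zc; apply: no_matching; exists u1, w1, z, c; split=> //.
  move: zuw cavoid; rewrite /= !inE !negb_or => /andP[zu zw] /and4P[cv cu cw cz].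
  rewrite ![vmin == _]eq_sym w1v cv (Sv_neq zS) (Sv_neq u1S) /=.
  by rewrite ![w1 == _]eq_sym cw (negbTE zw) (h_neq uw1) cz cu zu.
- apply: (@path_from_near_clique vmin vmin Hd) => z c zS _ cavoid.
  move: cavoid; rewrite !inE !negb_or => /and4P[cv _ _ cz].
  by apply: edge_g => //; apply/negP => zc; apply: no_edge; exists z, c.
Qed.

(* Case 2 deg vmin + 2 <= m for T_n^i, i <> 1: either h has a cherry
   inside Sv, or g restricted to Sv is dense enough to contain P_m. *)
Lemma T2_small_min_degree i : i != 1 -> 2 * deg vmin + 2 <= m ->
  contains n (T_adj n i) h.
Proof.
move=> i1 Hd.
case: (classic (exists u w1 w2, [/\ u \in Sv, w1 \in Sv, w2 \in Sv &
                                   [/\ h u w1, h u w2 & w1 != w2]]))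
  => [[u [w1 [w2 [uS w1S w2S [uw1 uw2 w12]]]]]|no_cherry].
  exact: (T_cherry i1 Hd uS w1S w2S uw1 uw2 w12).
exfalso; apply/no_path/path_from_sparse_complement => // u uS.
apply/card_le1_eqP => w1 w2 /setIdP[w1S uw1] /setIdP[w2S uw2].
apply/eqP/negPn/negP => w21; apply: no_cherry; exists u, w1, w2.
by do 2?split => //; rewrite eq_sym.
Qed.

Lemma T_in_complement i : contains n (T_adj n i) h.
Proof.
case: (leqP m (2 * deg vmin + 1)) => Hd; first exact: T_large_min_degree.
have {}Hd : 2 * deg vmin + 2 <= m by rewrite addnS.
case: (eqVneq i 1) => [->|i1]; first exact: T1_small_min_degree.
exact: T2_small_min_degree.
Qed.

End UpperBound.

Lemma ramsey_path_T n m i : 8 <= n -> n - 3 <= m -> m <= n -> 3 * m + 16 <= 4 * n ->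
  ramsey_number_is m path_adj n (T_adj n i) (2 * n - 7).
Proof.
move=> n8 Hm1 Hm2 Hm3; split; first lia; split.
- move=> g [gs gi]; case: (classic (contains m path_adj g)) => [|no_path]; first by left.
  by right; apply: (T_in_complement (erefl _) n8 Hm1 Hm2 Hm3 gs gi no_path).
- by move=> M _ HM; apply: lower_bound; lia.
Qed.

Theorem theorem4p3 (n i : nat) (Hi : i = 1 \/ i = 2) :
  (17 <= n -> ramsey_number_is n path_adj n (T_adj n i) (2 * n - 7)) /\
  (13 <= n -> ramsey_number_is (n - 1) path_adj n (T_adj n i) (2 * n - 7)) /\
  (11 <= n -> ramsey_number_is (n - 2) path_adj n (T_adj n i) (2 * n - 7)) /\
  (8 <= n -> ramsey_number_is (n - 3) path_adj n (T_adj n i) (2 * n - 7)).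
Proof.
by split; [|split; [|split]] => Hn; apply: ramsey_path_T; lia.
Qed.
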